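(* Let $H$ be a real Hilbert space with inner product $(\cdot,\cdot)_H$ and norm $\|\cdot\|_H$, and let $f:H\to\mathbb{R}$ be Fréchet differentiable with gradient $\nabla f$ Lipschitz continuous with constant $L$. Then for any $\Phi^{n-1},\Phi^n,\Phi^{n+1}\in H$, $$d_{2t}f(\Phi^{n+1})\le\big(d_{2t}\Phi^{n+1},\,2\nabla f(\Phi^n)-\nabla f(\Phi^{n-1})\big)_H+3L\|d_t\Phi^{n+1}\|_H^2+3L\|d_t\Phi^n\|_H^2,$$ $$d_tf(\Phi^{n+1})\le\big(d_t\Phi^{n+1},\,\tfrac32\nabla f(\Phi^n)-\tfrac12\nabla f(\Phi^{n-1})\big)_H+\tfrac{3L}{4}\|d_t\Phi^{n+1}\|_H^2+\tfrac{L}{4}\|d_t\Phi^n\|_H^2.$$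
   Context: Difference operators: $d_t(\bullet)^{n+1}=(\bullet)^{n+1}-(\bullet)^n$ (so $d_t\Phi^n=\Phi^n-\Phi^{n-1}$), $d_{2t}(\bullet)^{n+1}=3(\bullet)^{n+1}-4(\bullet)^n+(\bullet)^{n-1}$; applied to $f$ these mean e.g. $d_{2t}f(\Phi^{n+1})=3f(\Phi^{n+1})-4f(\Phi^n)+f(\Phi^{n-1})$. *)

From HB Require Import structures.
From mathcomp Require Import all_boot all_order all_algebra.
From mathcomp Require Import all_classical all_reals all_analysis.
Set Implicit Arguments. Unset Strict Implicit. Unset Printing Implicit Defensive.
Import Order.TTheory GRing.Theory Num.Theory.
Import numFieldNormedType.Exports.
Local Open Scope ring_scope.

Definition is_inner_product {R : realType} {H : normedModType R}
  (ip : H -> H -> R) : Prop :=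
  [/\ forall x y, ip x y = ip y x,
      forall a x y z, ip (a *: x + y) z = a * ip x z + ip y z,
      forall x, 0 <= ip x x
    & forall x, ip x x = `|x| ^+ 2].

Definition is_gradient {R : realType} {H : normedModType R}
  (ip : H -> H -> R) (f : H -> R) (g : H -> H) : Prop :=
  forall x, differentiable f x /\ forall v, 'd f x v = ip v (g x).

Definition lipschitz_const {R : realType} {H : normedModType R}
  (g : H -> H) (L : R) : Prop :=
  forall x y, `|g x - g y| <= L * `|x - y|.

From HB Require Import structures.
From mathcomp Require Import all_boot all_order all_algebra.
From mathcomp Require Import all_classical all_reals all_analysis.
From mathcomp Require Import ring lra.
Set Implicit Arguments.
Unset Strict Implicit.
Unset Printing Implicit Defensive.
Import Order.TTheory GRing.Theory Num.Theory.
Import numFieldNormedType.Exports.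
Local Open Scope classical_set_scope.
Local Open Scope ring_scope.

(* The descent lemma f y - f x <= (y - x, ∇f x) + L/2 |y - x|^2 is the mean
   value theorem for s |-> f (x + s (y - x)) - s (y - x, ∇f x) - s^2 L/2 |y - x|^2,
   whose derivative is nonpositive on [0, 1] by Cauchy-Schwarz and the Lipschitz
   bound.  Applied at Φ^n towards Φ^{n+1} and towards Φ^{n-1}, it reduces both
   inequalities to bounding (Φ^{n+1} - Φ^n, ∇f Φ^n - ∇f Φ^{n-1}) by L a b and
   (Φ^n - Φ^{n-1}, ∇f Φ^n - ∇f Φ^{n-1}) by L b^2, where a and b are the two step
   lengths, and then to L a b <= L (a^2 + b^2) / 2.  If L < 0, the Lipschitz
   condition forces the space to be trivial. *)

Lemma is_derive_line (R : numFieldType) (V W : normedModType R) (f : V -> W)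
    (x v : V) (t : R) :
  differentiable f (t *: v + x) ->
  is_derive t 1 (fun s : R => f (s *: v + x)) ('d f (t *: v + x) v).
Proof.
move=> df.
have dF : differentiable (f \o (fun s : R => s *: v + x)) t.
  exact: differentiable_comp.
apply: DeriveDef; first exact: diff_derivable.
by rewrite deriveE // diff_comp //= diff_val addr0 /= scale1r.
Qed.

Lemma is_derive_quadratic (R : numFieldType) (a b t : R) :
  is_derive t 1 (fun s : R => s * a + s ^+ 2 * b) (a + 2 * t * b).
Proof.
apply: is_derive_eq.
by rewrite !scaler0 !add0r -[a%:A]/(a * 1) -[b *: _]/(b * _) -[t%:A]/(t * 1); ring.
Qed.

Lemma lipschitz_const_lt0_trivial (R : realType) (H : normedModType R)
    (g : H -> H) (L : R) :
  lipschitz_const g L -> L < 0 -> forall x : H, x = 0.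
Proof.
move=> g_lip L_lt0 x; apply/normr0_eq0/eqP; rewrite eq_le normr_ge0 andbT.
have := g_lip x 0; rewrite subr0 => /(le_trans (normr_ge0 _)).
by rewrite nmulr_rge0.
Qed.

Section InnerProduct.
Variables (R : realType) (H : normedModType R) (ip : H -> H -> R).
Hypothesis ip_inner : is_inner_product ip.

Lemma ipC x y : ip x y = ip y x.
Proof. by case: ip_inner. Qed.

Lemma ip0l z : ip 0 z = 0.
Proof.
case: ip_inner => _ ipZDl _ _.
by have := ipZDl 1 0 0 z; rewrite scaler0 addr0 mul1r; lra.
Qed.

Lemma ipDl x y z : ip (x + y) z = ip x z + ip y z.
Proof. by case: ip_inner => _ ipZDl _ _; rewrite -[x]scale1r ipZDl mul1r scale1r. Qed.

Lemma ipZl a x z : ip (a *: x) z = a * ip x z.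
Proof. by case: ip_inner => _ ipZDl _ _; rewrite -[a *: x]addr0 ipZDl ip0l addr0. Qed.

Lemma ipNl x z : ip (- x) z = - ip x z.
Proof. by rewrite -scaleN1r ipZl mulN1r. Qed.

Lemma ipBl x y z : ip (x - y) z = ip x z - ip y z.
Proof. by rewrite ipDl ipNl. Qed.

Lemma ipDr x y z : ip z (x + y) = ip z x + ip z y.
Proof. by rewrite ipC ipDl !(ipC z). Qed.

Lemma ipZr a x z : ip z (a *: x) = a * ip z x.
Proof. by rewrite ipC ipZl ipC. Qed.

Lemma ipNr x z : ip z (- x) = - ip z x.
Proof. by rewrite ipC ipNl ipC. Qed.

Lemma ipBr x y z : ip z (x - y) = ip z x - ip z y.
Proof. by rewrite ipC ipBl !(ipC z). Qed.

Lemma ipxx x : ip x x = `|x| ^+ 2.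
Proof. by case: ip_inner. Qed.

Lemma ip_cauchy_schwarz u w : ip u w <= `|u| * `|w|.
Proof.
have normD2 : `|u + w| ^+ 2 = `|u| ^+ 2 + 2 * ip u w + `|w| ^+ 2.
  by rewrite -!ipxx ipDl !ipDr (ipC w u); ring.
have := ler_normD u w; have := normr_ge0 (u + w).
have := normr_ge0 u; have := normr_ge0 w.
nra.
Qed.

Section Lipschitz.
Variables (g : H -> H) (L : R).
Hypothesis g_lip : lipschitz_const g L.

Lemma ip_lipschitz_le u x y : ip u (g x - g y) <= L * `|u| * `|x - y|.
Proof.
apply: (le_trans (ip_cauchy_schwarz _ _)).
by rewrite -mulrA mulrCA ler_wpM2l ?normr_ge0 ?g_lip.
Qed.

Variable f : H -> R.
Hypothesis f_grad : is_gradient ip f g.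

Lemma is_derive_line_gradient (x v : H) (t : R) :
  is_derive t 1 (fun s : R => f (s *: v + x)) (ip v (g (t *: v + x))).
Proof.
have [df df_ip] := f_grad (t *: v + x).
by rewrite -df_ip; exact: is_derive_line.
Qed.

Lemma descent_lemma x y :
  f y - f x <= ip (y - x) (g x) + L / 2 * `|y - x| ^+ 2.
Proof.
set v := y - x; set a := ip v (g x); set b := L / 2 * `|v| ^+ 2.
pose psi := (fun s : R => f (s *: v + x)) - (fun s : R => s * a + s ^+ 2 * b).
have psi' (t : R) : is_derive t 1 psi (ip v (g (t *: v + x)) - (a + 2 * t * b)).
  exact: is_deriveB (is_derive_line_gradient x v t) (is_derive_quadratic a b t).
have psi_cont : {within `[0, 1], continuous psi}.
  by apply: derivable_within_continuous => t _; have [] := psi' t.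
have [c c01 psi_mvt] := MVT_segment ler01 (fun t _ => psi' t) psi_cont.
have c_ge0 : 0 <= c by move: c01; rewrite in_itv /= => /andP[].
have slope_le0 : ip v (g (c *: v + x)) - (a + 2 * c * b) <= 0.
  have := ip_lipschitz_le v (c *: v + x) x.
  by rewrite ipBr -/a addrK normrZ ger0_norm // /b; lra.
move: psi_mvt; rewrite /psi !fctE scale1r scale0r add0r subrK.
lra.
Qed.

End Lipschitz.
End InnerProduct.

Theorem lemma3p6 (R : realType) (H : completeNormedModType R)
  (ip : H -> H -> R) (f : H -> R) (gradf : H -> H) (L : R) :
  is_inner_product ip ->
  is_gradient ip f gradf ->
  lipschitz_const gradf L ->
  forall Pm Pn Pp : H,
    (3 * f Pp - 4 * f Pn + f Pm
       <= ip (3 *: Pp - 4 *: Pn + Pm) (2 *: gradf Pn - gradf Pm)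
          + 3 * L * `|Pp - Pn| ^+ 2 + 3 * L * `|Pn - Pm| ^+ 2)
    /\
    (f Pp - f Pn
       <= ip (Pp - Pn) ((3 / 2) *: gradf Pn - (1 / 2) *: gradf Pm)
          + (3 * L / 4) * `|Pp - Pn| ^+ 2 + (L / 4) * `|Pn - Pm| ^+ 2).
Proof.
move=> ip_inner f_grad grad_lip Pm Pn Pp.
have [L_ge0|L_lt0] := leP 0 L; last first.
  have triv := lipschitz_const_lt0_trivial grad_lip L_lt0.
  rewrite (triv Pm) (triv Pn) (triv Pp) !scaler0 !subr0 !addr0 !(ip0l ip_inner) normr0.
  by split; lra.
have step_p := descent_lemma ip_inner grad_lip f_grad Pn Pp.
have step_m := descent_lemma ip_inner grad_lip f_grad Pn Pm.
have lip_p := ip_lipschitz_le ip_inner grad_lip (Pn - Pp) Pn Pm.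
have lip_m := ip_lipschitz_le ip_inner grad_lip (Pn - Pm) Pn Pm.
rewrite (distrC Pm Pn) in step_m; rewrite (distrC Pn Pp) in lip_p.
set a := `|Pp - Pn| in step_p lip_p *; set b := `|Pn - Pm| in step_m lip_p lip_m *.
have amgm : 2 * (L * a * b) <= L * (a ^+ 2 + b ^+ 2).
  rewrite -subr_ge0 (_ : _ - _ = L * (a - b) ^+ 2); last by ring.
  by rewrite mulr_ge0 ?sqr_ge0.
move: step_p step_m lip_p lip_m.
rewrite !(ipDl ip_inner, ipNl ip_inner, ipZl ip_inner,
          ipDr ip_inner, ipNr ip_inner, ipZr ip_inner).
by split; lra.
Qed.
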